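(* Let $k\ge 1$ and let $G$ be a finite abelian group with prime-power decomposition $G\cong\bigoplus_i (\mathbb{Z}_{p_i^{r_i}})^{d_i}$, where the pairs $(p_i,r_i)$ are pairwise distinct, $p_i$ prime, $r_i\ge 1$, $d_i\ge 1$. Suppose at least one of the following holds: (1) for every $i$ with $p_i=2$ or $p_i=3$ one has $d_i\ge 2$ (no condition for $p_i>3$; $k$ arbitrary); (2) no $p_i$ equals $2$, and $k$ is even; (3) for every $i$ with $p_i=2$ one has $d_i\ge 2$, and $k=4s$ for some positive integer $s$. Then the restricted wreath product $G\wr\mathbb{Z}^k$ admits an automorphism $\varphi$ with $R(\varphi)<\infty$; i.e. $G\wr\mathbb{Z}^k$ does not have the $R_\infty$ property.
   Context: For a group $\Gamma$ and an endomorphism $\varphi$, elements $x,y\in\Gamma$ are $\varphi$-conjugate (twisted conjugate) if $y=gx\varphi(g^{-1})$ for some $g\in\Gamma$; the equivalence classes are Reidemeister classes and their number $R(\varphi)\in\{1,2,\dots\}\cup\{\infty\}$ is the Reidemeister number. A group has the $R_\infty$ property if every automorphism has $R(\varphi)=\infty$. The restricted wreath product is $G\wr\mathbb{Z}^k=\Sigma\rtimes_\alpha\mathbb{Z}^k$, where $\Sigma=\bigoplus_{x\in\mathbb{Z}^k}G_x$ with each $G_x$ a copy of $G$ (for $g\in G$, $g_x$ denotes $g$ in $G_x$), and $\alpha(x)(g_y)=g_{x+y}$. *)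

From HB Require Import structures.
From mathcomp Require Import all_boot all_order all_algebra.
Set Implicit Arguments. Unset Strict Implicit. Unset Printing Implicit Defensive.
Import Order.TTheory GRing.Theory Num.Theory.
Local Open Scope ring_scope.

Section Wreath.
Variables (G : zmodType) (k : nat).

Local Notation Zk := 'rV[int]_k.

Definition finsupp (f : Zk -> G) : Prop :=
  exists s : seq Zk, forall x, f x != 0 -> x \in s.

(* alpha(x) : (alpha(x) f)(z) = f (z - x), i.e. alpha(x)(g_y) = g_(x+y) *)
Definition wshift (x : Zk) (f : Zk -> G) : Zk -> G := fun z => f (z - x).

Lemma finsupp_shift x f : finsupp f -> finsupp (wshift x f).
Proof.
move=> [s hs]; exists [seq y + x | y <- s] => z /hs hz.
by apply/mapP; exists (z - x) => //; rewrite subrK.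
Qed.

Lemma finsupp_add f g : finsupp f -> finsupp g -> finsupp (fun z => f z + g z).
Proof.
move=> [s hs] [t ht]; exists (s ++ t) => z hz; rewrite mem_cat.
case: (eqVneq (f z) 0) => [fz0|/hs -> //].
by apply/orP; right; apply: ht; move: hz; rewrite fz0 add0r.
Qed.

Lemma finsupp_opp f : finsupp f -> finsupp (fun z => - f z).
Proof. by move=> [s hs]; exists s => z; rewrite oppr_eq0; apply: hs. Qed.

Lemma finsupp0 : finsupp (fun _ => 0).
Proof. by exists [::] => z; rewrite eqxx. Qed.

Record wr := Wr { wr_fun : Zk -> G; wr_pos : Zk; wr_fin : finsupp wr_fun }.

Definition wr_mul (a b : wr) : wr :=
  @Wr (fun z => wr_fun a z + wshift (wr_pos a) (wr_fun b) z)
      (wr_pos a + wr_pos b)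
      (finsupp_add (wr_fin a) (finsupp_shift (wr_pos a) (wr_fin b))).

Definition wr_inv (a : wr) : wr :=
  @Wr (fun z => - wshift (- wr_pos a) (wr_fun a) z) (- wr_pos a)
      (finsupp_opp (finsupp_shift (- wr_pos a) (wr_fin a))).

Definition wr_one : wr := @Wr (fun _ => 0) 0 finsupp0.

Definition wr_automorphism (phi : wr -> wr) : Prop :=
  (forall a b, phi (wr_mul a b) = wr_mul (phi a) (phi b)) /\ bijective phi.

Definition twisted_conj (phi : wr -> wr) (a b : wr) : Prop :=
  exists g : wr, b = wr_mul (wr_mul g a) (phi (wr_inv g)).

Definition reidemeister_finite (phi : wr -> wr) : Prop :=
  exists (n : nat) (r : 'I_n -> wr), forall a, exists i, twisted_conj phi a (r i).

End Wreath.

(* A decomposition datum is a list of triples ((p_i, r_i), d_i). *)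
Definition decomp_moduli (L : seq (nat * nat * nat)) : seq nat :=
  flatten [seq nseq t.2 (t.1.1 ^ t.1.2)%N | t <- L].

(* G is isomorphic to (+)_t Z_{m_t} (m = decomp_moduli L): there are elements
   e_t generating G whose only relations are m_t * e_t = 0, i.e. the map
   Z^n -> G, c |-> sum_t c_t e_t is onto with kernel (+)_t m_t Z. *)
Definition decomp_iso (G : zmodType) (L : seq (nat * nat * nat)) : Prop :=
  let ms := decomp_moduli L in
  exists e : 'I_(size ms) -> G,
    (forall c : 'I_(size ms) -> int,
       \sum_(t < size ms) e t *~ c t = 0 <->
       forall t : 'I_(size ms), ((nth 0%N ms t)%:Z %| c t)%Z)
    /\ (forall g : G, exists c : 'I_(size ms) -> int, g = \sum_(t < size ms) e t *~ c t).

(* Take phi (sigma, x) = (A \o sigma \o M^-1, M x), where M is an additive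
   automorphism of Z^k with 1 + M + ... + M^(n-1) = 0 and A is an automorphism of G
   for which 1 - A^n is injective.  The first condition puts n Z^k inside the image
   of 1 - M, so up to twisted conjugacy the translation parts are covered by the
   finitely many vectors in [0, n)^k; the second lets one solve the twisted
   conjugacy equation in the base group explicitly with (1 - A^n)^-1.
   For M take a block sum of companion matrices of 1 + X + ... + X^(n-1), with
   n = 2, 3, 5 in the three cases, which needs (n - 1) | k.  For A take
   multiplication by a unit u (u = 2 or -1) on the cyclic summands Z_q, and, for
   the primes where no such u works, the companion matrices of X^2 - X - 1 and
   X^3 - X - 1 on groups of two or three equal summands: for them det A and
   det (1 - A^n) are units modulo q. *)

From HB Require Import structures.
From mathcomp Require Import all_boot all_order all_algebra.
From mathcomp Require Import zify ring.
From Stdlib Require Import ProofIrrelevance FunctionalExtensionality.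
Set Implicit Arguments. Unset Strict Implicit. Unset Printing Implicit Defensive.
Import Order.TTheory GRing.Theory Num.Theory.
Local Open Scope ring_scope.

Lemma iter_raddfB (U : zmodType) (f : {additive U -> U}) j :
  {morph iter j f : x y / x - y}.
Proof. by elim: j => // j IH x y; rewrite /= IH raddfB. Qed.

HB.instance Definition _ (U : zmodType) (f : {additive U -> U}) j :=
  GRing.isZmodMorphism.Build _ _ (iter j f) (iter_raddfB f j).

Lemma iter_can_id (T : Type) (f g : T -> T) n :
  cancel f g -> (forall x, iter n f x = x) -> forall x, iter n g x = x.
Proof.
move=> fK fn x; rewrite -{1}[x]fn.
by elim: n {fn} => // n IH; rewrite iterSr /= fK.
Qed.

Lemma wr_ext (G : zmodType) k (a b : wr G k) :
  wr_fun a = wr_fun b -> wr_pos a = wr_pos b -> a = b.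
Proof.
case: a b => fa xa ha [fb xb hb] /= Ef Ex; subst.
by rewrite (proof_irrelevance _ ha hb).
Qed.

Lemma finsupp_comp (G H : zmodType) k (f : G -> H) (P Q : 'rV[int]_k -> 'rV[int]_k)
    (sigma : 'rV[int]_k -> G) :
  f 0 = 0 -> cancel P Q -> finsupp sigma -> finsupp (fun z => f (sigma (P z))).
Proof.
move=> f0 PK [s hs]; exists [seq Q y | y <- s] => z hz.
apply/mapP; exists (P z); last by rewrite PK.
by apply: hs; apply: contraNneq hz => ->; rewrite f0.
Qed.

Section TwistedAutomorphism.
Variables (G : finZmodType) (k n : nat).
Local Notation Zk := 'rV[int]_k.
Variables (M : {additive Zk -> Zk}) (A : {additive G -> G}).
Hypothesis n_gt0 : (0 < n)%N.
Hypothesis sum_iterM : forall x, \sum_(j < n) iter j M x = 0.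
Hypothesis A_inj : injective A.
Hypothesis fixfree : injective (fun g => g - iter n A g).

Lemma iterM_order x : iter n M x = x.
Proof.
transitivity (\sum_(j < n.+1) iter j M x).
  by rewrite big_ord_recr /= sum_iterM add0r.
by rewrite big_ord_recl /= -raddf_sum sum_iterM raddf0 addr0.
Qed.

Let Minv : {additive Zk -> Zk} := iter n.-1 M.
Let MK : cancel M Minv.
Proof. by move=> x; rewrite /Minv /= -iterSr prednK // iterM_order. Qed.
Let MinvK : cancel Minv M.
Proof. by move=> x; rewrite /Minv /= -iterS prednK // iterM_order. Qed.

Let Ainv := invF A_inj.
Let Ainv0 : Ainv 0 = 0.
Proof. by rewrite /Ainv -{1}(raddf0 A) invF_f. Qed.

Definition wr_twist (a : wr G k) : wr G k :=
  Wr (M (wr_pos a)) (finsupp_comp (raddf0 A) MinvK (wr_fin a)).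

Lemma wr_twist_automorphism : wr_automorphism wr_twist.
Proof.
split=> [a b|].
  apply: wr_ext => /=; last exact: raddfD.
  apply: functional_extensionality => z.
  by rewrite /wshift raddfD raddfB MK.
pose untwist a := Wr (Minv (wr_pos a)) (finsupp_comp Ainv0 MK (wr_fin a)).
exists untwist => a; apply: wr_ext => /=; rewrite ?MK ?MinvK //;
  by apply: functional_extensionality => z; rewrite /Ainv ?MK ?MinvK ?invF_f ?f_invF.
Qed.

(* n z = \sum_(j < n) (z - M^j z), and each z - M^j z lies in the image of 1 - M. *)
Lemma mulrn_in_range (z : Zk) : exists w, z *+ n = w - M w.
Proof.
have geom j : \sum_(i < j) iter i M z - M (\sum_(i < j) iter i M z) = z - iter j M z.
  elim: j => [|j IH]; first by rewrite !big_ord0 raddf0 !subrr.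
  by rewrite big_ord_recr raddfD opprD addrACA IH addrA subrK.
exists (\sum_(j < n) \sum_(i < j) iter i M z).
rewrite raddf_sum -sumrB; under eq_bigr do rewrite geom.
by rewrite sumrB sum_iterM subr0 sumr_const card_ord.
Qed.

Definition row_of_ffun (f : {ffun 'I_k -> 'I_n}) : Zk := \row_i (f i : nat)%:Z.

Lemma coset_decomposition x :
  exists f : {ffun 'I_k -> 'I_n}, exists y, x = row_of_ffun f + (y - M y).
Proof.
have n0 : n%:Z != 0 by rewrite eqz_nat -lt0n.
have mod_lt i : (`|(x ord0 i %% n)%Z|%N < n)%N.
  by rewrite -ltz_nat abszE ger0_norm ?modz_ge0 ?ltz_mod.
exists [ffun i => Ordinal (mod_lt i)].
have [y hy] := mulrn_in_range (\row_i (x ord0 i %/ n)%Z); exists y; rewrite -hy.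
apply/rowP => i; rewrite !mxE mulmxnE !mxE ffunE /=.
by rewrite abszE ger0_norm ?modz_ge0 // addrC -mulr_natr natz -divz_eq.
Qed.

Let Binv := invF fixfree.
Let BinvK g : Binv g - iter n A (Binv g) = g. Proof. exact: (f_invF fixfree). Qed.
Let Binv0 : Binv 0 = 0. Proof. by apply: fixfree; rewrite /= BinvK raddf0 subr0. Qed.

Lemma twisted_equation_solvable (h : Zk -> Zk) (tau : Zk -> G) :
  (forall v, iter n h v = v) -> finsupp tau ->
  exists2 rho : Zk -> G, finsupp rho & forall v, rho v - A (rho (h v)) = tau v.
Proof.
move=> h_order [s tau_s].
(* rho = \sum_(j < n) A^j (1 - A^n)^-1 tau h^j telescopes since h^n = 1. *)
pose F v j := iter j A (Binv (tau (iter j h v))).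
exists (fun v => \sum_(j < n) F v j).
  exists [seq iter (n - j) h u | j <- iota 0 n, u <- s] => v.
  case: (boolP [exists j : 'I_n, F v j != 0]) => [/existsP [j nzj] _|/existsPn F0].
    apply/allpairsP; exists (val j, iter j h v) => /=; split.
    - by rewrite mem_iota /= ltn_ord.
    - by apply: tau_s; apply: contraNneq nzj; rewrite /F => ->; rewrite Binv0 raddf0.
    - by rewrite -iterD subnK ?h_order // ltnW.
  by rewrite big1 ?eqxx // => j _; move/negPn/eqP: (F0 j).
move=> v; have shiftF : A (\sum_(j < n) F (h v) j) = \sum_(j < n) F v j.+1.
  by rewrite raddf_sum; apply: eq_bigr => j _; rewrite /F -iterSr.
rewrite shiftF -sumrB -[LHS]opprK -sumrN.
under eq_bigr do rewrite opprB.
rewrite -(big_mkord xpredT (fun j => F v j.+1 - F v j)) telescope_sumr //.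
by rewrite opprB /F /= h_order BinvK.
Qed.

Lemma affine_order x v : iter n (fun v => Minv (v - x)) v = v.
Proof.
apply: (@iter_can_id _ (fun u => M u + x)) => [u|u]; first by rewrite addrK MK.
have iter_affine j : iter j (fun u => M u + x) u = iter j M u + \sum_(i < j) iter i M x.
  elim: j => [|j IH]; first by rewrite big_ord0 addr0.
  by rewrite iterS IH raddfD raddf_sum big_ord_recl -addrA [_ + x]addrC.
by rewrite iter_affine iterM_order sum_iterM addr0.
Qed.

Lemma wr_twist_reidemeister_finite : reidemeister_finite wr_twist.
Proof.
pose rep (f : {ffun 'I_k -> 'I_n}) := Wr (row_of_ffun f) (finsupp0 G k).
exists #|{ffun 'I_k -> 'I_n}|, (fun i => rep (enum_val i)) => -[tau x tau_fin].
have [f [y Ex]] := coset_decomposition x.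
have [rho rho_fin rhoE] :=
  twisted_equation_solvable (affine_order x) (finsupp_opp tau_fin).
exists (enum_rank f); rewrite enum_rankK.
exists (Wr (- y) (finsupp_shift (- y) rho_fin)); apply: wr_ext => /=.
  apply: functional_extensionality => z; rewrite /wshift !opprK subrK raddfN.
  have -> : z - (- y + x) = z + y - x by rewrite opprD opprK addrA.
  by rewrite addrAC rhoE addNr.
by rewrite opprK Ex addrCA addKr subrK.
Qed.

Lemma exists_reidemeister_finite_automorphism :
  exists phi : wr G k -> wr G k, wr_automorphism phi /\ reidemeister_finite phi.
Proof.
exists wr_twist.
by split; [apply: wr_twist_automorphism | apply: wr_twist_reidemeister_finite].
Qed.

End TwistedAutomorphism.

(* The companion matrix of 1 + X + ... + X^d, acting on row vectors:
   e_i |-> e_(i+1) for i < d - 1 and e_(d-1) |-> - (e_0 + ... + e_(d-1)). *)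
Definition cyclo_companion d : 'M[int]_d :=
  \matrix_(i, j) ((i.+1 == j :> nat)%:R - (i == d.-1 :> nat)%:R).

Lemma sum_exp_cyclo_companion d : \sum_(j < d.+1) cyclo_companion d ^+ j = 0.
Proof.
case: d => [|d]; first exact: flatmx0.
set C := cyclo_companion d.+1; set P := \sum_(j < d.+2) C ^+ j.
pose e (i : nat) : 'rV[int]_d.+1 := \row_l (i == l :> nat)%:R.
have eE (i : 'I_d.+1) : 'e_i = e i by apply/rowP => l; rewrite !mxE eqxx eq_sym.
have eC (i : 'I_d.+1) : e i *m C = e i.+1 - (i == d :> nat)%:R *: const_mx 1.
  by rewrite -eE -rowE; apply/rowP => l; rewrite !mxE mulr1.
have e0C j : (j <= d)%N -> e 0%N *m C ^+ j = e j.
  elim: j => [|j IH] hj; first by rewrite expr0 mulmx1.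
  rewrite exprSr mulmxA IH; last exact: ltnW.
  by rewrite (eC (Ordinal (ltnW hj : j < d.+1)%N)) (ltn_eqF hj) scale0r subr0.
have e_out : e d.+1 = 0 by apply/rowP => l; rewrite !mxE gtn_eqF.
have sum_e : \sum_(j < d.+1) e j = const_mx 1.
  apply/rowP => l; rewrite summxE !mxE (bigD1 l) // !mxE eqxx big1 ?addr0 // => j.
  by rewrite mxE -val_eqE => /negPf ->.
have e0P : e 0%N *m P = 0.
  rewrite mulmx_sumr big_ord_recr /= exprSr mulmxA e0C // (eC ord_max) /= eqxx.
  rewrite e_out sub0r scale1r -sum_e; apply/eqP; rewrite subr_eq0; apply/eqP.
  by apply: eq_bigr => j _; rewrite e0C; last by rewrite -ltnS.
have CP i : C ^+ i *m P = P *m C ^+ i.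
  rewrite !mulmxE mulr_sumr mulr_suml.
  by apply: eq_bigr => j _; rewrite -!exprD addnC.
apply/row_matrixP => i; rewrite row0 rowE eE -e0C; last by rewrite -ltnS.
by rewrite -mulmxA CP mulmxA e0P mul0mx.
Qed.

Lemma exists_additive_iter_sum0 n k : (0 < n)%N -> (n.-1 %| k)%N ->
  exists M : {additive 'rV[int]_k -> 'rV[int]_k}, forall x, \sum_(j < n) iter j M x = 0.
Proof.
case: n => // d _ /dvdnP [s ->]; set C := cyclo_companion d.
exists (mxvec \o mulmxr C \o vec_mx) => x.
have iterE j : iter j (mxvec \o mulmxr C \o vec_mx) x = mxvec (vec_mx x *m C ^+ j).
  elim: j => [|j IH]; first by rewrite expr0 mulmx1 vec_mxK.
  by rewrite iterS IH /= mxvecK exprSr mulmxA.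
under eq_bigr do rewrite iterE.
by rewrite -linear_sum -mulmx_sumr sum_exp_cyclo_companion mulmx0 linear0.
Qed.

(* A coefficient sequence c : nat -> int stands for the element \sum_t c t e_t of G.
   A list of blocks cuts the indices into consecutive segments, each acted on
   separately: Scal q u multiplies by u, while Fib q and Padovan q act by the
   companion matrices of X^2 - X - 1 and X^3 - X - 1. *)
Inductive block := Scal of nat & int | Fib of nat | Padovan of nat.

Definition block_size (a : block) : nat :=
  match a with Scal _ _ => 1 | Fib _ => 2 | Padovan _ => 3 end.

Definition block_mod (a : block) : nat :=
  match a with Scal q _ | Fib q | Padovan q => q end.

Definition block_act (a : block) (c : nat -> int) : nat -> int := fun j =>
  match a, j with
  | Scal _ u, 0 => u * c 0%N
  | Fib _, 0 => c 1%N
  | Fib _, 1 => c 0%N + c 1%N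
  | Padovan _, 0 => c 1%N
  | Padovan _, 1 => c 2%N
  | Padovan _, 2 => c 0%N + c 1%N
  | _, _ => 0
  end.

Definition coef_join (s : nat) (f g : nat -> int) : nat -> int :=
  fun j => if (j < s)%N then f j else g (j - s)%N.

Definition coef_shift (s : nat) (c : nat -> int) : nat -> int := fun j => c (j + s)%N.

Fixpoint blocks_act (bs : seq block) (c : nat -> int) : nat -> int :=
  if bs is a :: bs' then
    coef_join (block_size a) (block_act a c) (blocks_act bs' (coef_shift (block_size a) c))
  else fun _ => 0.

Definition block_dvd (a : block) (c : nat -> int) : Prop :=
  forall j, (j < block_size a)%N -> ((block_mod a)%:Z %| c j)%Z.

Fixpoint in_lattice (bs : seq block) (c : nat -> int) : Prop :=
  if bs is a :: bs' then block_dvd a c /\ in_lattice bs' (coef_shift (block_size a) c)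
  else True.

Definition block_moduli (bs : seq block) : seq nat :=
  flatten [seq nseq (block_size a) (block_mod a) | a <- bs].

Lemma in_latticeE bs c : in_lattice bs c <->
  forall j, (j < size (block_moduli bs))%N -> ((nth 0%N (block_moduli bs) j)%:Z %| c j)%Z.
Proof.
elim: bs c => [|a bs IH] c /=; first by split.
rewrite /block_moduli /= -/(block_moduli bs) size_cat size_nseq; split.
  move=> [ca /IH cbs] j lt_j; rewrite nth_cat size_nseq.
  case: ifP => ja; first by rewrite nth_nseq ja; apply: ca.
  have := cbs (j - block_size a)%N; rewrite /coef_shift subnK; last by lia.
  by apply; lia.
move=> H; split=> [j ja|].
  by have := H j; rewrite nth_cat size_nseq ja nth_nseq ja; apply; lia.
apply/IH => j lt_j; have := H (j + block_size a)%N.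
rewrite nth_cat size_nseq addnK (_ : j + block_size a < block_size a = false)%N; last by lia.
by apply; lia.
Qed.

Lemma block_actB a c c' j :
  block_act a (fun i => c i - c' i) j = block_act a c j - block_act a c' j.
Proof. by case: a => [q u|q|q]; case: j => [|[|[|j]]] /=; ring. Qed.

Lemma blocks_actB bs c c' j :
  blocks_act bs (fun i => c i - c' i) j = blocks_act bs c j - blocks_act bs c' j.
Proof.
elim: bs c c' j => [|a bs IH] c c' j /=; first by rewrite subr0.
by rewrite /coef_join; case: ifP => _; rewrite ?block_actB // -IH.
Qed.

Lemma coef_shift_join s f g : coef_shift s (coef_join s f g) = g.
Proof.
apply: functional_extensionality => j; rewrite /coef_shift /coef_join addnK.
by rewrite (_ : j + s < s = false)%N //; lia.
Qed.

Lemma coef_join_shift s c : coef_join s c (coef_shift s c) = c.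
Proof.
apply: functional_extensionality => j; rewrite /coef_join /coef_shift.
by case: ifP => // /negbT; rewrite -leqNgt => /subnK ->.
Qed.

Lemma block_act_join a f g : block_act a (coef_join (block_size a) f g) = block_act a f.
Proof.
apply: functional_extensionality => j.
by case: a => [q u|q|q]; case: j => [|[|[|j]]].
Qed.

Lemma iter_blocks_act_cons a bs j c :
  iter j (blocks_act (a :: bs)) c =
  coef_join (block_size a) (iter j (block_act a) c)
    (iter j (blocks_act bs) (coef_shift (block_size a) c)).
Proof.
elim: j => [|j IH] /=; first by rewrite coef_join_shift.
by rewrite IH block_act_join coef_shift_join.
Qed.

Lemma block_act_dvd a c : block_dvd a c -> block_dvd a (block_act a c).
Proof.
case: a => [q u|q|q] /= ca j lt_j.
- by case: j lt_j => [|j] // _; apply/dvdz_mull/ca.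
- by case: j lt_j => [|[|j]] // _; rewrite ?rpredD ?ca.
- by case: j lt_j => [|[|[|j]]] // _; rewrite ?rpredD ?ca.
Qed.

Lemma blocks_act_lattice bs c : in_lattice bs c -> in_lattice bs (blocks_act bs c).
Proof.
elim: bs c => [|a bs IH] c //= [ca cbs]; rewrite coef_shift_join; split; last exact: IH.
by move=> j lt_j; rewrite /coef_join lt_j; apply: block_act_dvd.
Qed.

Definition block_reflects_dvd (a : block) (f : (nat -> int) -> nat -> int) :=
  forall c, block_dvd a (f c) -> block_dvd a c.

Definition block_invertible a := block_reflects_dvd a (block_act a).

Definition block_fixfree n a :=
  block_reflects_dvd a (fun c j => c j - iter n (block_act a) c j).

Lemma blocks_act_lattice_inv bs c :
  (forall a, List.In a bs -> block_invertible a) ->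
  in_lattice bs (blocks_act bs c) -> in_lattice bs c.
Proof.
elim: bs c => [|a bs IH] c //= inv_bs [ca cbs]; rewrite coef_shift_join in cbs; split.
  apply: (inv_bs a (or_introl erefl)) => j lt_j.
  by have := ca j lt_j; rewrite /coef_join lt_j.
by apply: IH cbs => b bbs; apply: inv_bs; right.
Qed.

Lemma blocks_fixfree_lattice n bs c :
  (forall a, List.In a bs -> block_fixfree n a) ->
  in_lattice bs (fun j => c j - iter n (blocks_act bs) c j) -> in_lattice bs c.
Proof.
elim: bs c => [|a bs IH] c //= ff_bs; rewrite iter_blocks_act_cons => -[ca cbs]; split.
  apply: (ff_bs a (or_introl erefl)) => j lt_j.
  by have := ca j lt_j; rewrite /coef_join lt_j.
apply: IH => [b bbs|]; first by apply: ff_bs; right.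
move: cbs; congr in_lattice; apply: functional_extensionality => j.
by rewrite /coef_shift /coef_join (_ : j + block_size a < block_size a = false)%N ?addnK //; lia.
Qed.

Section BlockAutomorphism.
Variables (G : finZmodType) (bs : seq block).
Local Notation N := (size (block_moduli bs)).
Variable e : 'I_N -> G.
Hypothesis e_rel : forall c : 'I_N -> int,
  \sum_(t < N) e t *~ c t = 0 <-> forall t : 'I_N, ((nth 0%N (block_moduli bs) t)%:Z %| c t)%Z.
Hypothesis e_gen : forall g : G, exists c : 'I_N -> int, g = \sum_(t < N) e t *~ c t.

Definition comb (c : nat -> int) : G := \sum_(t < N) e t *~ c t.

Lemma combB c c' : comb c - comb c' = comb (fun j => c j - c' j).
Proof. by rewrite /comb -sumrB; apply: eq_bigr => t _; rewrite mulrzBr. Qed.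

Lemma comb_eq0 c : comb c = 0 <-> in_lattice bs c.
Proof.
rewrite in_latticeE (e_rel (fun t => c t)); split=> [dvd_c j lt_j|dvd_c t].
  exact: (dvd_c (Ordinal lt_j)).
exact: dvd_c.
Qed.

Lemma comb_eq c c' : comb c = comb c' <-> in_lattice bs (fun j => c j - c' j).
Proof.
rewrite -comb_eq0 -combB.
by split=> [->|/eqP]; rewrite ?subrr // subr_eq0 => /eqP.
Qed.

Lemma exists_comb g :
  exists c : {ffun 'I_N -> int}, g == comb (fun j => odflt 0 (omap c (insub j))).
Proof.
have [c ->] := e_gen g; exists [ffun t => c t].
by apply/eqP/eq_bigr => t _; rewrite valK /= ffunE.
Qed.

Definition coords (g : G) : nat -> int :=
  let c := xchoose (exists_comb g) in fun j => odflt 0 (omap c (insub j)).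

Lemma coordsK g : comb (coords g) = g.
Proof. by rewrite /coords; case: (xchooseP (exists_comb g)) => /eqP. Qed.

Definition block_aut (g : G) : G := comb (blocks_act bs (coords g)).

Lemma block_aut_comb c : block_aut (comb c) = comb (blocks_act bs c).
Proof.
apply/comb_eq; under [fun j => _]functional_extensionality do rewrite -blocks_actB.
by apply/blocks_act_lattice/comb_eq; rewrite coordsK.
Qed.

Lemma block_autB : {morph block_aut : g h / g - h}.
Proof.
move=> g h; rewrite -[g]coordsK -[h]coordsK combB !block_aut_comb combB.
by congr comb; apply: functional_extensionality => j; rewrite blocks_actB.
Qed.

HB.instance Definition _ := GRing.isZmodMorphism.Build G G block_aut block_autB.

Lemma block_aut_inj : (forall a, List.In a bs -> block_invertible a) -> injective block_aut.
Proof.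
move=> inv_bs g h; rewrite -[g]coordsK -[h]coordsK !block_aut_comb => /comb_eq.
under [fun j => _]functional_extensionality do rewrite -blocks_actB.
by move/(blocks_act_lattice_inv inv_bs)/comb_eq.
Qed.

Lemma block_aut_fixfree n : (forall a, List.In a bs -> block_fixfree n a) ->
  injective (fun g => g - iter n block_aut g).
Proof.
move=> ff_bs g h /= E; apply/eqP; rewrite -subr_eq0; apply/eqP.
have : (g - h) - iter n block_aut (g - h) = 0.
  by rewrite raddfB opprB addrACA [- h + _]addrC -addrACA E -opprB addNr.
have iter_comb j c : iter j block_aut (comb c) = comb (iter j (blocks_act bs) c).
  by elim: j => //= j ->; rewrite block_aut_comb.
rewrite -[g - h]coordsK iter_comb combB => /comb_eq0.
by move/(blocks_fixfree_lattice ff_bs)/comb_eq0.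
Qed.

Lemma exists_block_aut n :
  (forall a, List.In a bs -> block_invertible a /\ block_fixfree n a) ->
  exists A : {additive G -> G}, injective A /\ injective (fun g => g - iter n A g).
Proof.
move=> good; exists block_aut.
by split; [apply: block_aut_inj | apply: block_aut_fixfree] => a /good [].
Qed.

End BlockAutomorphism.

Definition entry (rows : seq (seq int)) (j i : nat) : int := nth 0 (nth [::] rows j) i.

Lemma block_reflects_by_inverse a (f : (nat -> int) -> nat -> int) (D : int)
    (rows : seq (seq int)) :
  (forall c j, (j < block_size a)%N ->
     c j * D = \sum_(i < block_size a) entry rows j i * f c i) ->
  coprimez (block_mod a) D -> block_reflects_dvd a f.
Proof.
move=> inv coD c fc j lt_j; rewrite -(Gauss_dvdzl _ coD) inv //.
by apply: rpred_sum => i _; apply/dvdz_mull/fc/ltn_ord.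
Qed.

Lemma coprimez1 (m : int) : coprimez m 1.
Proof. by rewrite /coprimez gcdz1. Qed.

Ltac check_inverse :=
  move=> c; case=> [|[|[|j]]] // _; rewrite !big_ord_recr big_ord0 /entry /=; ring.

Lemma Fib_invertible q : block_invertible (Fib q).
Proof.
apply: (block_reflects_by_inverse (D := 1) (rows := [:: [:: -1; 1]; [:: 1; 0]]));
  [check_inverse | exact: coprimez1].
Qed.

Lemma Padovan_invertible q : block_invertible (Padovan q).
Proof.
apply: (block_reflects_by_inverse (D := 1)
  (rows := [:: [:: -1; 0; 1]; [:: 1; 0; 0]; [:: 0; 1; 0]]));
  [check_inverse | exact: coprimez1].
Qed.

Lemma Scal_invertible q u : coprimez q%:Z u -> block_invertible (Scal q u).
Proof.
by move=> cop; apply: (block_reflects_by_inverse (D := u) (rows := [:: [:: 1]]));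
  first check_inverse.
Qed.

Lemma Scal_fixfree n q u : coprimez q%:Z (1 - u ^+ n) -> block_fixfree n (Scal q u).
Proof.
have iterE c : iter n (block_act (Scal q u)) c 0%N = u ^+ n * c 0%N.
  by elim: n => [|n IH] /=; rewrite ?mul1r // IH exprS mulrA.
move=> cop; apply: (block_reflects_by_inverse (D := 1 - u ^+ n) (rows := [:: [:: 1]])) => // c.
by case=> // _; rewrite big_ord_recr big_ord0 /entry /= iterE; ring.
Qed.

(* det (1 - Fib^2) = det (1 - Padovan^2) = det (1 - Padovan^5) = -1, but
   det (1 - Fib^5) = -11. *)
Lemma Fib_fixfree2 q : block_fixfree 2 (Fib q).
Proof.
apply: (block_reflects_by_inverse (D := 1) (rows := [:: [:: 1; -1]; [:: -1; 0]]));
  [check_inverse | exact: coprimez1].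
Qed.

Lemma Padovan_fixfree2 q : block_fixfree 2 (Padovan q).
Proof.
apply: (block_reflects_by_inverse (D := 1)
  (rows := [:: [:: 0; -1; 0]; [:: 0; 0; -1]; [:: -1; -1; 0]]));
  [check_inverse | exact: coprimez1].
Qed.

Lemma Fib_fixfree5 q : coprimez q%:Z 11 -> block_fixfree 5 (Fib q).
Proof.
move=> cop.
by apply: (block_reflects_by_inverse (D := 11) (rows := [:: [:: 7; -5]; [:: -5; 2]]));
  first check_inverse.
Qed.

Lemma Padovan_fixfree5 q : block_fixfree 5 (Padovan q).
Proof.
apply: (block_reflects_by_inverse (D := 1)
  (rows := [:: [:: 1; -1; 0]; [:: 0; 1; -1]; [:: -1; -1; 1]]));
  [check_inverse | exact: coprimez1].
Qed.

Definition fib_blocks (q d : nat) : seq block :=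
  if odd d then Padovan q :: nseq (d./2 - 1) (Fib q) else nseq d./2 (Fib q).

Definition decomp_blocks (bl : nat -> bool) (u : int) (L : seq (nat * nat * nat)) :=
  flatten [seq if bl t.1.1 then fib_blocks (t.1.1 ^ t.1.2) t.2
               else nseq t.2 (Scal (t.1.1 ^ t.1.2) u) | t <- L].

Lemma block_moduli_cat bs bs' :
  block_moduli (bs ++ bs') = block_moduli bs ++ block_moduli bs'.
Proof. by rewrite /block_moduli map_cat flatten_cat. Qed.

Lemma block_moduli_nseq m a :
  block_moduli (nseq m a) = nseq (m * block_size a) (block_mod a).
Proof.
elim: m => //= m IH.
by rewrite /block_moduli /= -/(block_moduli _) IH mulSn nseqD.
Qed.

Lemma block_moduli_fib_blocks q d : (2 <= d)%N -> block_moduli (fib_blocks q d) = nseq d q.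
Proof.
move=> d_ge2; have dE := odd_double_half d; rewrite /fib_blocks -[in RHS]dE.
case: (odd d) dE => /= dE; last by rewrite block_moduli_nseq /= muln2.
rewrite /block_moduli /= -/(block_moduli _) block_moduli_nseq /=.
by rewrite (_ : d./2.*2 = ((d./2 - 1) * 2).+2) //; lia.
Qed.

Lemma block_moduli_decomp_blocks (bl : nat -> bool) u L :
  (forall t, t \in L -> bl t.1.1 -> (2 <= t.2)%N) ->
  block_moduli (decomp_blocks bl u L) = decomp_moduli L.
Proof.
elim: L => [|t L IH] //= big_d.
rewrite block_moduli_cat IH; last by move=> t' t'L; apply: big_d; rewrite in_cons t'L orbT.
congr cat; case: ifP => bl_t; last by rewrite block_moduli_nseq muln1.
by rewrite block_moduli_fib_blocks // big_d ?mem_head.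
Qed.

Lemma In_nseq T (P : T -> Prop) a x m : P x -> List.In a (nseq m x) -> P a.
Proof. by move=> Px; elim: m => //= m IH [<-|/IH]. Qed.

Lemma decomp_blocks_ind (P : block -> Prop) (bl : nat -> bool) u L :
  (forall t, t \in L -> bl t.1.1 ->
     P (Fib (t.1.1 ^ t.1.2)) /\ P (Padovan (t.1.1 ^ t.1.2))) ->
  (forall t, t \in L -> ~~ bl t.1.1 -> P (Scal (t.1.1 ^ t.1.2) u)) ->
  forall a, List.In a (decomp_blocks bl u L) -> P a.
Proof.
elim: L => [|t L IH] // Pbl Pscal a; rewrite /= List.in_app_iff => -[|]; last first.
  by apply: IH => t' t'L; [apply: Pbl | apply: Pscal]; rewrite in_cons t'L orbT.
case: ifP => bl_t; last by apply: In_nseq; apply: Pscal; rewrite ?mem_head ?bl_t.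
have [PFib PPad] := Pbl t (mem_head _ _) bl_t.
by rewrite /fib_blocks; case: odd => [[<-|]|] //; apply: In_nseq.
Qed.

Lemma exists_block_automorphism (G : finZmodType) L n (bl : nat -> bool) (u : int) :
  decomp_iso G L ->
  (forall t, t \in L -> let q := (t.1.1 ^ t.1.2)%N in
     if bl t.1.1 then [/\ 2 <= t.2, block_fixfree n (Fib q) & block_fixfree n (Padovan q)]%N
     else coprimez q%:Z u /\ coprimez q%:Z (1 - u ^+ n)) ->
  exists A : {additive G -> G}, injective A /\ injective (fun g => g - iter n A g).
Proof.
move=> hG cond; set bs := decomp_blocks bl u L.
have moduliE : block_moduli bs = decomp_moduli L.
  by apply: block_moduli_decomp_blocks => t tL bl_t; have := cond t tL; rewrite bl_t => -[].
have good : forall a, List.In a bs -> block_invertible a /\ block_fixfree n a.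
  apply: decomp_blocks_ind => [t tL bl_t|t tL /negbTE bl_t]; have := cond t tL; rewrite bl_t.
    case=> _ ffFib ffPad.
    by split; split=> //; [apply: Fib_invertible | apply: Padovan_invertible].
  by case=> cop1 cop2; split; [apply: Scal_invertible | apply: Scal_fixfree].
move: hG; rewrite /decomp_iso /= -moduliE => -[e [e_rel e_gen]].
exact: exists_block_aut e_rel e_gen _ good.
Qed.

Lemma wreath_reidemeister_finite (G : finZmodType) L k n (bl : nat -> bool) (u : int) :
  decomp_iso G L -> (0 < n)%N -> (n.-1 %| k)%N ->
  (forall t, t \in L -> let q := (t.1.1 ^ t.1.2)%N in
     if bl t.1.1 then [/\ 2 <= t.2, block_fixfree n (Fib q) & block_fixfree n (Padovan q)]%N
     else coprimez q%:Z u /\ coprimez q%:Z (1 - u ^+ n)) ->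
  exists phi : wr G k -> wr G k, wr_automorphism phi /\ reidemeister_finite phi.
Proof.
move=> hG n_gt0 dvd_k cond.
have [M sumM] := exists_additive_iter_sum0 n_gt0 dvd_k.
have [A [A_inj fixfree]] := exists_block_automorphism hG cond.
exact: exists_reidemeister_finite_automorphism n_gt0 sumM A_inj fixfree.
Qed.

Lemma coprimez_prime_power p r D : prime p -> prime D -> p != D ->
  coprimez (p ^ r)%N%:Z D%:Z.
Proof.
move=> p_pr D_pr neq_pD; rewrite coprimezE /=.
case: r => [|r]; first by rewrite expn0 coprime1n.
by rewrite coprime_pexpl // prime_coprime // dvdn_prime2.
Qed.

Unset Implicit Arguments.

Theorem mainTheorem1 (k : nat) (hk : (1 <= k)%N)
  (G : finZmodType) (L : seq (nat * nat * nat))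
  (hL_uniq : uniq [seq t.1 | t <- L])
  (hL_valid : forall t, t \in L ->
      [/\ prime t.1.1, (1 <= t.1.2)%N & (1 <= t.2)%N])
  (hG : decomp_iso G L)
  (hcond :
     (forall t, t \in L -> (t.1.1 == 2)%N || (t.1.1 == 3)%N -> (2 <= t.2)%N)
  \/ ((forall t, t \in L -> t.1.1 != 2%N) /\ ~~ odd k)
  \/ ((forall t, t \in L -> t.1.1 = 2%N -> (2 <= t.2)%N) /\
      exists s : nat, (0 < s)%N /\ k = (4 * s)%N)) :
  exists phi : wr G k -> wr G k,
    wr_automorphism phi /\ reidemeister_finite phi.
Proof.
have cop t D : t \in L -> prime D -> t.1.1 != D -> coprimez (t.1.1 ^ t.1.2)%N%:Z D%:Z.
  by move=> /hL_valid [p_pr _ _]; apply: coprimez_prime_power.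
case: hcond => [small_d|[[odd_p even_k]|[two_d [s [_ ks]]]]].
- apply: (@wreath_reidemeister_finite G L k 2 (fun p => (p == 2) || (p == 3))%N 2 hG)
    => // t tL /=.
  case: ifP => [/(small_d t tL) d_ge2|].
    by split; [|apply: Fib_fixfree2|apply: Padovan_fixfree2].
  move/negbT; rewrite negb_or => /andP[p2 p3].
  by split; [apply: cop | rewrite (_ : 1 - 2 ^+ 2 = - 3%:Z) // coprimezN; apply: cop].
- apply: (@wreath_reidemeister_finite G L k 3 (fun _ => false) (-1) hG) => // [|t tL /=].
    by rewrite dvdn2.
  split; first by rewrite coprimezN coprimez1.
  by rewrite (_ : 1 - (-1) ^+ 3 = 2%:Z) //; apply: cop => //; apply: odd_p.
- apply: (@wreath_reidemeister_finite G L k 5 (fun p => p == 2)%N (-1) hG) => // [|t tL /=].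
    by rewrite ks dvdn_mulr.
  case: ifP => [/eqP p2|/negbT p2].
    split; [exact: two_d | |exact: Padovan_fixfree5].
    by apply: Fib_fixfree5; rewrite p2; apply: coprimez_prime_power.
  split; first by rewrite coprimezN coprimez1.
  by rewrite (_ : 1 - (-1) ^+ 5 = 2%:Z) //; apply: cop.
Qed.
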